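(* Let $G$ be a triangle-free graph on $n$ vertices with at least one edge. Then $\chi_f(\overline{G})\ge\vartheta(G)\ge\frac1{16}\,n^{2/3}$.
   Context: $\overline{G}$ is the complement. $\chi_f(H)$ is the fractional chromatic number: the minimum of $\sum_I x_I$ over nonnegative weights on independent sets $I$ of $H$ with $\sum_{I\ni v}x_I\ge1$ for every vertex $v$. $\vartheta(G)$ is the Lovász theta function: the maximum of $\mathrm{Tr}(BJ)$ over positive semidefinite $B$ indexed by $V(G)$ with $\mathrm{Tr}B=1$ and $B_{i,j}=0$ for $\{i,j\}\in E(G)$, $J$ the all-ones matrix. *)

From HB Require Import structures.
From mathcomp Require Import all_boot all_order all_algebra.
From mathcomp Require Import all_classical all_reals all_analysis.
Set Implicit Arguments. Unset Strict Implicit. Unset Printing Implicit Defensive.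
Import Order.TTheory GRing.Theory Num.Theory.
Local Open Scope ring_scope.
Local Open Scope classical_set_scope.

Definition simple_graph (n : nat) (e : rel 'I_n) : Prop :=
  irreflexive e /\ symmetric e.

Definition triangle_free (n : nat) (e : rel 'I_n) : Prop :=
  forall x y z : 'I_n, ~ [&& e x y, e y z & e x z].

Definition has_edge (n : nat) (e : rel 'I_n) : Prop := exists x y, e x y.

Definition compl_graph (n : nat) (e : rel 'I_n) : rel 'I_n :=
  fun x y => (x != y) && ~~ e x y.

Definition independent (n : nat) (e : rel 'I_n) (I : {set 'I_n}) : bool :=
  [forall x in I, forall y in I, ~~ e x y].

Definition frac_colouring (R : realType) (n : nat) (e : rel 'I_n)
  (x : {ffun {set 'I_n} -> R}) : Prop :=
  (forall I, 0 <= x I) /\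
  (forall I, ~~ independent e I -> x I = 0) /\
  (forall v : 'I_n, 1 <= \sum_(I | independent e I && (v \in I)) x I).

Definition frac_chromatic (R : realType) (n : nat) (e : rel 'I_n) : R :=
  inf [set s : R | exists x, frac_colouring e x /\
                     s = \sum_(I | independent e I) x I].

Definition psd (R : realType) (n : nat) (B : 'M[R]_n) : Prop :=
  B^T = B /\ forall v : 'cV[R]_n, 0 <= (v^T *m B *m v) ord0 ord0.

Definition theta_feasible (R : realType) (n : nat) (e : rel 'I_n)
  (B : 'M[R]_n) : Prop :=
  psd B /\ \tr B = 1 /\ (forall i j, e i j -> B i j = 0).

Definition lovasz_theta (R : realType) (n : nat) (e : rel 'I_n) : R :=
  sup [set t : R | exists B, theta_feasible e B /\
                     t = \tr (B *m const_mx 1)].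

From HB Require Import structures.
From mathcomp Require Import all_boot all_order all_algebra.
From mathcomp Require Import all_classical all_reals all_analysis.
From mathcomp Require Import ring lra.

(* Weak duality: let x be a fractional cover of the vertices of G by cliques,
   with coverage y >= 1 and total weight k, and let B be feasible for theta.
   Expanding 0 <= sum_J x_J q_B(1_J / y - 1 / k), where q_B is the quadratic
   form of B, and using that B vanishes on pairs of distinct vertices of a
   clique of G, gives (sum of entries of B) <= k * sum_i B_ii / y_i <= k.

   Lower bound: put t = n^(1/3).  If some vertex has degree >= t^2/16, its
   neighbourhood is independent (G is triangle-free), and the normalised
   all-ones matrix on an independent set I is feasible with value |I|.
   Otherwise, with A the adjacency matrix, (A - t/2)^2 + tJ is positive
   semidefinite and vanishes on edges, since (A^2)_ij = 0 there; its trace is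
   at most n (t^2/16 + t^2/4 + t) and its entry sum at least n t (n - t^2/16),
   so after normalising the trace its value is at least t^2/16. *)

Set Implicit Arguments.
Unset Strict Implicit.
Unset Printing Implicit Defensive.

Import Order.TTheory GRing.Theory Num.Theory.
Local Open Scope ring_scope.

Section RealMatrices.
Variables (R : realType) (n : nat).
Implicit Types (B P : 'M[R]_n) (f : 'I_n -> R).

Definition qform B f : R := \sum_i \sum_j f i * B i j * f j.

Definition sum_entries B : R := \sum_i \sum_j B i j.

Lemma mxtrace_mul_const1 B : \tr (B *m const_mx 1) = sum_entries B.
Proof.
apply: eq_bigr => i _; rewrite !mxE.
by apply: eq_bigr => j _; rewrite mxE mulr1.
Qed.

Lemma sum_entriesZ c B : sum_entries (c *: B) = c * sum_entries B.
Proof.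
rewrite /sum_entries mulr_sumr; apply: eq_bigr => i _.
by rewrite mulr_sumr; apply: eq_bigr => j _; rewrite mxE.
Qed.

Lemma psd_qform_ge0 B f : psd B -> 0 <= qform B f.
Proof.
move=> [_ /(_ (\col_i f i))]; rewrite !mxE /qform.
under eq_bigr => j _ do rewrite !mxE.
under eq_bigr => j _ do (under eq_bigr => i _ do rewrite !mxE).
by under eq_bigr => j _ do rewrite mulr_suml; rewrite exchange_big.
Qed.

Lemma psd_diag_ge0 B i : psd B -> 0 <= B i i.
Proof.
move=> psdB; have := psd_qform_ge0 (fun k => (k == i)%:R) psdB.
rewrite /qform (bigD1 i) //= [X in _ + X]big1 => [|k /negbTE ki]; last first.
  by rewrite big1 // => j _; rewrite ki !mul0r.
rewrite addr0 (bigD1 i) //= [X in _ + X]big1 => [|j /negbTE ji]; last by rewrite ji mulr0.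
by rewrite eqxx mul1r mulr1 addr0.
Qed.

Lemma psd_sum_entries_ge0 B : psd B -> 0 <= sum_entries B.
Proof.
move/(psd_qform_ge0 ^~ (fun=> 1)); rewrite /qform.
by under eq_bigr do under eq_bigr do rewrite mulr1 mul1r.
Qed.

Lemma psdD B1 B2 : psd B1 -> psd B2 -> psd (B1 + B2).
Proof.
move=> [sym1 pos1] [sym2 pos2]; split; first by rewrite linearD /= sym1 sym2.
by move=> v; rewrite mulmxDr mulmxDl mxE addr_ge0.
Qed.

Lemma psdZ c B : 0 <= c -> psd B -> psd (c *: B).
Proof.
move=> c_ge0 [symB posB]; split; first by rewrite linearZ /= symB.
by move=> v; rewrite -scalemxAr -scalemxAl mxE mulr_ge0.
Qed.

Lemma psd_trmx_mul m (F : 'M[R]_(m, n)) : psd (F^T *m F).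
Proof.
split; first by rewrite trmx_mul trmxK.
move=> v; rewrite !mulmxA -mulmxA -trmx_mul mxE.
by apply: sumr_ge0 => k _; rewrite mxE -expr2 sqr_ge0.
Qed.

Lemma gram_shift_sym (A : 'M[R]_n) (s : R) : A^T = A ->
  (A - s%:M)^T *m (A - s%:M) = A *m A - (2 * s) *: A + (s ^+ 2)%:M.
Proof.
move=> symA; rewrite [(A - _)^T]linearB /= tr_scalar_mx symA mulmxBl !mulmxBr.
rewrite mul_mx_scalar mul_scalar_mx -scalar_mxM.
by apply/matrixP => i j; rewrite !mxE; ring.
Qed.

End RealMatrices.

Section WeakDuality.
Variables (R : realType) (n : nat) (e : rel 'I_n).

Lemma weighted_qform_shift (T : finType) (B : 'M[R]_n) (w : T -> R)
    (f : T -> 'I_n -> R) (c : R) :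
  (forall i, \sum_J w J * f J i = 1) -> c * \sum_J w J = 1 ->
  \sum_J w J * qform B (fun i => f J i - c) =
  \sum_i \sum_j B i j * (\sum_J w J * f J i * f J j - c).
Proof.
move=> wf1 cw1; rewrite /qform.
under eq_bigr do rewrite mulr_sumr; rewrite exchange_big; apply: eq_bigr => i _.
under eq_bigr do rewrite mulr_sumr; rewrite exchange_big; apply: eq_bigr => j _.
transitivity (B i j * \sum_J (w J * f J i * f J j - c * (w J * f J j)
                               - c * (w J * f J i) + c * c * w J)).
  by rewrite mulr_sumr; apply: eq_bigr => J _; ring.
by rewrite !big_split /= !sumrN -!mulr_sumr !wf1 -mulrA cw1; congr (_ * _); ring.
Qed.

Definition coverage (x : {ffun {set 'I_n} -> R}) (i : 'I_n) : R :=
  \sum_I x I * (i \in I)%:R.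

Section FracColouring.
Variable x : {ffun {set 'I_n} -> R}.
Hypothesis xcol : frac_colouring (compl_graph e) x.

Lemma frac_colouring_total :
  \sum_(I | independent (compl_graph e) I) x I = \sum_I x I.
Proof.
have [_ [x_indep _]] := xcol.
rewrite big_mkcond; apply: eq_bigr => I _.
by case: ifP => // /negbT /x_indep ->.
Qed.

Lemma coverageE i :
  coverage x i = \sum_(I | independent (compl_graph e) I && (i \in I)) x I.
Proof.
have [_ [x_indep _]] := xcol.
rewrite big_mkcond; apply/eq_bigr => I _.
case: (boolP (independent _ I)) => [_|/x_indep ->] /=.
  by case: (i \in I); rewrite ?mulr1 ?mulr0.
by case: (i \in I); rewrite ?mul0r.
Qed.

Lemma coverage_ge1 i : 1 <= coverage x i.
Proof. by rewrite coverageE; case: xcol => _ []. Qed.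

Lemma coverage_gt0 i : 0 < coverage x i.
Proof. exact: lt_le_trans ltr01 (coverage_ge1 i). Qed.

Lemma frac_colouring_clique (I : {set 'I_n}) i j :
  i != j -> ~~ e i j -> i \in I -> j \in I -> x I = 0.
Proof.
move=> ij eij iI jI; have [_ [x_indep _]] := xcol; apply: x_indep.
apply/forall_inP => /(_ i iI)/forall_inP/(_ j jI).
by rewrite /compl_graph ij eij.
Qed.

Definition cover_weight (I : {set 'I_n}) i : R := (i \in I)%:R / coverage x i.

Lemma sum_cover_weight i : \sum_I x I * cover_weight I i = 1.
Proof.
rewrite /cover_weight; under eq_bigr do rewrite mulrA.
by rewrite -mulr_suml -/(coverage x i) divff ?gt_eqF ?coverage_gt0.
Qed.

Lemma sum_cover_weight_sqr i :
  \sum_I x I * cover_weight I i * cover_weight I i = (coverage x i)^-1.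
Proof.
transitivity (\sum_I x I * (i \in I)%:R * (coverage x i)^-1 ^+ 2).
  by apply: eq_bigr => I _; rewrite /cover_weight; case: (i \in I) => /=; ring.
rewrite -mulr_suml -/(coverage x i) expr2 mulrA divff ?mul1r //.
by rewrite gt_eqF ?coverage_gt0.
Qed.

Lemma sum_cover_weight_offdiag (B : 'M[R]_n) i j :
  (forall i j, e i j -> B i j = 0) -> i != j ->
  B i j * \sum_I x I * cover_weight I i * cover_weight I j = 0.
Proof.
move=> Be ij; case: (boolP (e i j)) => [/Be -> | eij]; first by rewrite mul0r.
rewrite big1 ?mulr0 // => I _; rewrite /cover_weight.
case: (boolP (i \in I)) => iI; last by rewrite !(mul0r, mulr0).
case: (boolP (j \in I)) => jI; last by rewrite !(mul0r, mulr0).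
by rewrite (frac_colouring_clique ij eij iI jI) !mul0r.
Qed.

End FracColouring.

Lemma sum_entries_le_frac_colouring (B : 'M[R]_n) x :
  theta_feasible e B -> frac_colouring (compl_graph e) x ->
  sum_entries B <= \sum_(I | independent (compl_graph e) I) x I.
Proof.
move=> [psdB [trB1 Be]] xcol; have [x_ge0 _] := xcol.
rewrite frac_colouring_total //; set k := \sum_I x I; set a := cover_weight x.
have [i0 _] : exists i0 : 'I_n, true.
  case: (pickP (fun _ : 'I_n => true)) => [i0 _|none]; first by exists i0.
  by move: trB1; rewrite /mxtrace big_pred0 // => /eqP; rewrite eq_sym oner_eq0.
have k_gt0 : 0 < k.
  apply: (lt_le_trans (coverage_gt0 xcol i0)); apply: ler_sum => I _ /=.
  by case: (i0 \in I); rewrite ?mulr1 ?mulr0.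
have : 0 <= \sum_I x I * qform B (fun i => a I i - k^-1).
  by apply: sumr_ge0 => I _; rewrite mulr_ge0 ?psd_qform_ge0.
rewrite (weighted_qform_shift _ (sum_cover_weight xcol) (mulVf (lt0r_neq0 k_gt0))).
have -> : \sum_i \sum_j B i j * (\sum_I x I * a I i * a I j - k^-1) =
          \sum_i B i i / coverage x i - k^-1 * sum_entries B.
  rewrite /sum_entries mulr_sumr -sumrB; apply: eq_bigr => i _.
  under eq_bigr do rewrite mulrBr; rewrite sumrB mulr_sumr; congr (_ - _).
    rewrite (bigD1 i) //= [X in _ + X]big1 => [|j ji].
      by rewrite (sum_cover_weight_sqr xcol) addr0.
    by rewrite (sum_cover_weight_offdiag xcol) // eq_sym.
  by apply: eq_bigr => j _; rewrite mulrC.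
have diag_le : \sum_i B i i / coverage x i <= 1.
  rewrite -trB1; apply: ler_sum => i _.
  by rewrite ler_pdivrMr ?coverage_gt0 // ler_peMr ?psd_diag_ge0 ?coverage_ge1.
rewrite subr_ge0 => /le_trans/(_ diag_le).
by rewrite ler_pdivrMl // mulr1.
Qed.

End WeakDuality.

Section FeasibleMatrices.
Variables (R : realType) (n : nat) (e : rel 'I_n).

Definition nbhd (v : 'I_n) : {set 'I_n} := [set j | e v j].

Definition adjmx : 'M[R]_n := \matrix_(i, j) (e i j)%:R.

Lemma sum_indicator (A : {set 'I_n}) : \sum_j (j \in A)%:R = #|A|%:R :> R.
Proof.
rewrite -sumr_const [RHS]big_mkcond; apply: eq_bigr => j _.
by case: (j \in A).
Qed.

Lemma card_nbhd v : #|nbhd v|%:R = \sum_j (e v j)%:R :> R.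
Proof. by rewrite -sum_indicator; apply: eq_bigr => j _; rewrite inE. Qed.

Lemma triangle_free_nbhd_independent v :
  triangle_free e -> independent e (nbhd v).
Proof.
move=> tf; apply/forall_inP => i; rewrite inE => evi.
apply/forall_inP => j; rewrite inE => evj.
by apply/negP => eij; apply: (tf v i j); rewrite evi eij evj.
Qed.

Lemma theta_feasible_normalize (P : 'M[R]_n) :
  psd P -> 0 < \tr P -> (forall i j, e i j -> P i j = 0) ->
  theta_feasible e ((\tr P)^-1 *: P).
Proof.
move=> psdP trP_gt0 P_edge; split; first by apply: psdZ; rewrite // invr_ge0 ltW.
split; first by rewrite mxtraceZ mulVf // gt_eqF.
by move=> i j /P_edge eP; rewrite mxE eP mulr0.
Qed.

Lemma theta_feasible_independent (I : {set 'I_n}) :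
  independent e I -> (0 < #|I|)%N ->
  exists B : 'M[R]_n, theta_feasible e B /\ sum_entries B = #|I|%:R.
Proof.
move=> indI I_gt0; pose u : 'rV[R]_n := \row_j (j \in I)%:R.
have uuE i j : (u^T *m u) i j = (i \in I)%:R * (j \in I)%:R.
  by rewrite mxE big_ord1 !mxE.
have I_gt0R : (0 < #|I|%:R :> R) by rewrite ltr0n.
have tr_uu : \tr (u^T *m u) = #|I|%:R.
  rewrite -sum_indicator; apply: eq_bigr => i _.
  by rewrite uuE; case: (i \in I); rewrite ?mulr1 ?mulr0.
exists ((\tr (u^T *m u))^-1 *: (u^T *m u)); split.
  apply: theta_feasible_normalize; [exact: psd_trmx_mul | by rewrite tr_uu |].
  move=> i j eij; rewrite uuE.
  case: (boolP (i \in I)) => iI; last by rewrite mul0r.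
  case: (boolP (j \in I)) => jI; last by rewrite mulr0.
  by move/forall_inP: indI => /(_ i iI)/forall_inP/(_ j jI); rewrite eij.
rewrite sum_entriesZ tr_uu.
have -> : sum_entries (u^T *m u) = #|I|%:R * #|I|%:R.
  rewrite -sum_indicator mulr_suml; apply: eq_bigr => i _.
  by rewrite mulr_sumr; apply: eq_bigr => j _; rewrite uuE.
by rewrite mulKf // gt_eqF.
Qed.

Lemma adjmx_sqrE i j : (adjmx *m adjmx) i j = \sum_k (e i k)%:R * (e k j)%:R.
Proof. by rewrite mxE; apply: eq_bigr => k _; rewrite !mxE. Qed.

Lemma adjmx_sqr_ge0 i j : 0 <= (adjmx *m adjmx) i j.
Proof. by rewrite adjmx_sqrE sumr_ge0 // => k _; rewrite mulr_ge0. Qed.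

Lemma triangle_free_adjmx_sqr i j :
  triangle_free e -> e i j -> (adjmx *m adjmx) i j = 0.
Proof.
move=> tf eij; rewrite adjmx_sqrE big1 // => k _.
case: (boolP (e i k)) => eik; last by rewrite mul0r.
case: (boolP (e k j)) => ekj; last by rewrite mulr0.
by case: (tf i k j); rewrite eik ekj eij.
Qed.

Lemma adjmx_sqr_diag i : symmetric e -> (adjmx *m adjmx) i i = #|nbhd i|%:R.
Proof.
move=> sym; rewrite adjmx_sqrE card_nbhd; apply: eq_bigr => k _.
by rewrite (sym k i); case: (e i k); rewrite ?mulr1 ?mulr0.
Qed.

End FeasibleMatrices.

Section LovaszWitness.
Variables (R : realType) (n : nat) (e : rel 'I_n) (t : R).
Hypotheses (simple_e : simple_graph e) (tf : triangle_free e) (t_gt0 : 0 < t).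

Definition lovasz_witness : 'M[R]_n :=
  let M := adjmx R e - (t / 2)%:M in
  M^T *m M + t *: ((const_mx 1 : 'rV[R]_n)^T *m const_mx 1).

Lemma lovasz_witnessE i j : lovasz_witness i j =
  (adjmx R e *m adjmx R e) i j - t * (e i j)%:R + (t / 2) ^+ 2 * (i == j)%:R + t.
Proof.
have [_ sym] := simple_e.
have adjT : (adjmx R e)^T = adjmx R e by apply/matrixP => k l; rewrite !mxE sym.
have two_half : 2 * (t / 2) = t by rewrite mulrC divfK ?pnatr_eq0.
by rewrite mxE gram_shift_sym // !mxE big_ord1 !mxE two_half !mulr_natr !mulr1.
Qed.

Lemma lovasz_witness_psd : psd lovasz_witness.
Proof.
by apply: psdD; [exact: psd_trmx_mul | apply: psdZ; [exact: ltW | exact: psd_trmx_mul]].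
Qed.

Lemma lovasz_witness_edge i j : e i j -> lovasz_witness i j = 0.
Proof.
have [irr _] := simple_e; move=> eij.
have ij : (i == j) = false by apply: contraTF eij => /eqP ->; rewrite irr.
by rewrite lovasz_witnessE triangle_free_adjmx_sqr // eij ij mulr0 mulr1 sub0r addr0 addNr.
Qed.

Lemma lovasz_witness_diag i :
  lovasz_witness i i = #|nbhd e i|%:R + (t / 2) ^+ 2 + t.
Proof.
have [irr sym] := simple_e.
by rewrite lovasz_witnessE adjmx_sqr_diag // irr eqxx mulr0 subr0 mulr1.
Qed.

Lemma lovasz_witness_ge i j : t - t * (e i j)%:R <= lovasz_witness i j.
Proof.
rewrite lovasz_witnessE; have := adjmx_sqr_ge0 R e i j.
have : 0 <= (t / 2) ^+ 2 * (i == j)%:R by rewrite mulr_ge0 ?sqr_ge0.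
lra.
Qed.

Lemma theta_feasible_max_degree (d : R) :
  (0 < n)%N -> (forall v, #|nbhd e v|%:R <= d) ->
  exists B : 'M[R]_n, theta_feasible e B /\
    t * (n%:R - d) <= (d + (t / 2) ^+ 2 + t) * sum_entries B.
Proof.
move=> n_gt0 deg_le; set P := lovasz_witness; set K := d + (t / 2) ^+ 2 + t.
have sum_const (c : R) : \sum_(i < n) c = n%:R * c.
  by rewrite sumr_const card_ord mulr_natl.
have n_gt0R : 0 < n%:R :> R by rewrite ltr0n.
have trP_gt0 : 0 < \tr P.
  apply: (lt_le_trans (mulr_gt0 n_gt0R t_gt0)); rewrite -sum_const.
  apply: ler_sum => i _; rewrite lovasz_witness_diag.
  by rewrite lerDr addr_ge0 ?sqr_ge0.
have trP_le : \tr P <= n%:R * K.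
  rewrite -sum_const; apply: ler_sum => i _; rewrite lovasz_witness_diag.
  by rewrite !lerD2r deg_le.
have sumP_ge : n%:R * (t * (n%:R - d)) <= sum_entries P.
  rewrite -sum_const; apply: ler_sum => i _.
  have row_ge : \sum_j (t - t * (e i j)%:R) <= \sum_j P i j.
    by apply: ler_sum => j _; exact: lovasz_witness_ge.
  apply: le_trans row_ge; rewrite sumrB sum_const -mulr_sumr mulrBr [n%:R * t]mulrC.
  by rewrite lerB // ler_pM2l // -card_nbhd.
exists ((\tr P)^-1 *: P).
have feasB : theta_feasible e ((\tr P)^-1 *: P).
  apply: theta_feasible_normalize => //; [exact: lovasz_witness_psd | exact: lovasz_witness_edge].
split=> //; have SB_ge0 := psd_sum_entries_ge0 feasB.1.
have sumP_eq : sum_entries P = \tr P * sum_entries ((\tr P)^-1 *: P).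
  by rewrite sum_entriesZ mulrA mulfV ?mul1r // gt_eqF.
rewrite -(ler_pM2l n_gt0R) (le_trans sumP_ge) // sumP_eq mulrA.
exact: ler_wpM2r SB_ge0 _ _ trP_le.
Qed.

End LovaszWitness.

Lemma frac_colouring_exists (R : realType) (n : nat) (g : rel 'I_n) :
  irreflexive g -> exists x : {ffun {set 'I_n} -> R}, frac_colouring g x.
Proof.
move=> irr_g; pose x : {ffun {set 'I_n} -> R} := [ffun I : {set 'I_n} => (#|I| == 1)%N%:R].
have indep1 v : independent g [set v].
  apply/forall_inP => u /set1P ->; apply/forall_inP => w /set1P ->.
  by rewrite irr_g.
exists x; split; first by move=> I; rewrite ffunE ler0n.
split.
  move=> I; rewrite ffunE; case: (boolP (#|I| == 1)%N) => // /cards1P [v ->].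
  by rewrite indep1.
move=> v; rewrite (bigD1 [set v]) /=; last by rewrite indep1 set11.
by rewrite ffunE cards1 lerDl sumr_ge0 // => I _; rewrite ffunE ler0n.
Qed.

Section LovaszTheta.
Variables (R : realType) (n : nat) (e : rel 'I_n).

Lemma compl_graph_irr : irreflexive (compl_graph e).
Proof. by move=> v; rewrite /compl_graph eqxx. Qed.

Lemma sum_entries_le_lovasz_theta (B : 'M[R]_n) :
  theta_feasible e B -> sum_entries B <= lovasz_theta R e.
Proof.
have [x xcol] := frac_colouring_exists R compl_graph_irr.
move=> feasB; apply: ub_le_sup; last by exists B; rewrite mxtrace_mul_const1.
exists (\sum_(I | independent (compl_graph e) I) x I) => _ [B' [feasB' ->]].
by rewrite mxtrace_mul_const1; exact: sum_entries_le_frac_colouring.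
Qed.

Lemma lovasz_theta_le_frac_chromatic :
  (exists B : 'M[R]_n, theta_feasible e B) ->
  lovasz_theta R e <= frac_chromatic R (compl_graph e).
Proof.
move=> [B feasB]; have [x xcol] := frac_colouring_exists R compl_graph_irr.
apply: lb_le_inf; first by exists (\sum_(I | independent (compl_graph e) I) x I), x.
move=> _ [y [ycol ->]]; apply: ge_sup; first by exists (\tr (B *m const_mx 1)), B.
by move=> _ [B' [feasB' ->]]; rewrite mxtrace_mul_const1; exact: sum_entries_le_frac_colouring.
Qed.

End LovaszTheta.

Lemma powR_ratio (R : realType) (x : R) (m k : nat) :
  0 <= x -> x `^ (m%:R / k%:R) = (x `^ k%:R^-1) ^+ m.
Proof. by move=> x_ge0; rewrite -powR_mulrn ?powR_ge0 // -powRrM mulrC. Qed.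

Lemma exists_theta_feasible_ge (R : realType) (n : nat) (e : rel 'I_n) (t : R) :
  simple_graph e -> triangle_free e -> 1 <= t -> t ^+ 3 = n%:R ->
  exists B : 'M[R]_n, theta_feasible e B /\ t ^+ 2 / 16 <= sum_entries B.
Proof.
move=> simple_e tf t_ge1 t3; set d := t ^+ 2 / 16.
have t_gt0 : 0 < t := lt_le_trans ltr01 t_ge1.
have d_gt0 : 0 < d by rewrite divr_gt0 ?exprn_gt0.
have [/existsP [v deg_v] | /existsPn small] := boolP [exists v, d <= #|nbhd e v|%:R :> R].
  have nbhd_gt0 : (0 < #|nbhd e v|)%N by rewrite -(ltr0n R) (lt_le_trans d_gt0).
  have [B [feasB SB]] :=
    theta_feasible_independent R (triangle_free_nbhd_independent v tf) nbhd_gt0.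
  by exists B; rewrite SB.
have deg_le w : #|nbhd e w|%:R <= d by rewrite ltW // ltNge small.
have n_gt0 : (0 < n)%N by rewrite -(ltr0n R) -t3 exprn_gt0.
have [B [feasB SB]] := theta_feasible_max_degree simple_e tf t_gt0 n_gt0 deg_le.
exists B; split=> //; rewrite -t3 in SB.
have K_gt0 : 0 < d + (t / 2) ^+ 2 + t.
  have : 0 <= d + (t / 2) ^+ 2 by rewrite addr_ge0 ?sqr_ge0 // ltW.
  lra.
rewrite -(ler_pM2l K_gt0) (le_trans _ SB) // -subr_ge0.
have -> : t * (t ^+ 3 - d) - (d + (t / 2) ^+ 2 + t) * d =
          t ^+ 3 * (t * (251 / 256) - 1 / 8).
  by rewrite /d; field.
by apply: mulr_ge0; [exact: exprn_ge0 (ltW t_gt0) | lra].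
Qed.

Theorem mainTheorem14 (R : realType) (n : nat) (e : rel 'I_n) :
  simple_graph e -> triangle_free e -> has_edge e ->
  frac_chromatic R (compl_graph e) >= lovasz_theta R e /\
  lovasz_theta R e >= powR (n%:R : R) (2 / 3) / 16.
Proof.
move=> simple_e tf [v [w _]]; set t := (n%:R : R) `^ 3^-1.
have n_ge1 : 1 <= n%:R :> R by rewrite ler1n (leq_ltn_trans (leq0n v) (ltn_ord v)).
have t3 : t ^+ 3 = n%:R.
  by rewrite -powR_ratio ?ler0n // divff ?pnatr_eq0 // powRr1 ?ler0n.
have t_ge1 : 1 <= t by rewrite -(expr_ge1 (_ : 0 < 3)%N) ?powR_ge0 // t3.
have [B [feasB SB]] := exists_theta_feasible_ge simple_e tf t_ge1 t3.
split; first by apply: lovasz_theta_le_frac_chromatic; exists B.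
rewrite powR_ratio ?ler0n // -/t.
exact: le_trans SB (sum_entries_le_lovasz_theta feasB).
Qed.
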